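(* For every block graph $G$, $\operatorname{cobox}(G)\le \operatorname{cothdim}(G)\le 2\operatorname{cobox}(G)$.
   Context: All graphs are finite and simple. A block is a maximal connected subgraph with no cut-vertex of its own; a block graph is a graph whose blocks are all complete. The co-boxicity $\operatorname{cobox}(G)$ is the boxicity of the complement of $G$; equivalently, the minimum number of co-interval subgraphs of $G$ whose edge sets have union $E(G)$, where a graph is co-interval if its vertices can be assigned closed real intervals such that two vertices are adjacent iff their intervals are disjoint. A threshold graph is a graph obtainable from a single vertex by repeatedly adding an isolated or a universal vertex. The threshold co-dimension $\operatorname{cothdim}(G)$ is the minimum number of threshold subgraphs of $G$ whose edge sets have union $E(G)$. *)

From Stdlib Require Import Reals.
From mathcomp Require Import all_boot.
Set Implicit Arguments. Unset Strict Implicit. Unset Printing Implicit Defensive.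

Definition simple_graph (T : finType) (e : rel T) : Prop :=
  symmetric e /\ irreflexive e.

Definition connected_on (T : finType) (e : rel T) (A : {set T}) : Prop :=
  forall x y, x \in A -> y \in A ->
    connect [rel u v | [&& e u v, u \in A & v \in A]] x y.

Definition biconnected_set (T : finType) (e : rel T) (B : {set T}) : Prop :=
  B != set0 /\ connected_on e B /\ forall v, v \in B -> connected_on e (B :\ v).

(* A block: a maximal connected subgraph with no cut-vertex
   (maximal subgraphs of this kind are induced, so we use vertex sets). *)
Definition is_block (T : finType) (e : rel T) (B : {set T}) : Prop :=
  biconnected_set e B /\
  forall B' : {set T}, B \proper B' -> ~ biconnected_set e B'.

Definition block_graph (T : finType) (e : rel T) : Prop :=
  simple_graph e /\
  forall B, is_block e B -> forall x y, x \in B -> y \in B -> x != y -> e x y.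

Definition subgraph_of (T : finType) (e : rel T) (S : {set T}) (h : rel T) : Prop :=
  symmetric h /\ forall x y, h x y -> [/\ x \in S, y \in S & e x y].

Definition cointerval (T : finType) (S : {set T}) (h : rel T) : Prop :=
  exists l r : T -> R,
    (forall x, x \in S -> Rle (l x) (r x)) /\
    forall x y, x \in S -> y \in S -> x != y ->
      (h x y <-> (Rlt (r x) (l y) \/ Rlt (r y) (l x))).

(* Threshold graph: obtained from a single vertex by repeatedly adding an
   isolated (b = false) or universal (b = true) vertex; s lists the vertices
   in order of addition. *)
Definition threshold (T : finType) (S : {set T}) (h : rel T) : Prop :=
  exists (s : seq T) (b : T -> bool),
    [/\ s != [::], uniq s, (forall x, (x \in s) = (x \in S)) &
        forall x y, x \in S -> y \in S -> x != y ->
          (h x y <-> (if index x s < index y s then b y else b x))].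

Definition edge_cover (T : finType) (e : rel T)
    (P : {set T} -> rel T -> Prop) (k : nat) : Prop :=
  exists (S : 'I_k -> {set T}) (h : 'I_k -> rel T),
    [/\ forall i, subgraph_of e (S i) (h i),
        forall i, P (S i) (h i) &
        forall x y, e x y <-> exists i, h i x y].

Definition is_min_cover (T : finType) (e : rel T)
    (P : {set T} -> rel T -> Prop) (k : nat) : Prop :=
  edge_cover e P k /\ forall k', edge_cover e P k' -> k <= k'.

Definition is_cobox (T : finType) (e : rel T) (k : nat) : Prop :=
  is_min_cover e (@cointerval T) k.
Definition is_cothdim (T : finType) (e : rel T) (k : nat) : Prop :=
  is_min_cover e (@threshold T) k.

From mathcomp Require Import all_boot zify.
From Stdlib Require Import Reals Lra Classical.
Set Implicit Arguments. Unset Strict Implicit. Unset Printing Implicit Defensive.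

(* Threshold graphs are co-interval, whence cobox <= cothdim. Conversely, let
   H be a co-interval subgraph of a block graph G, p the vertex whose interval
   ends first and q the one whose interval starts last. An edge xy of H with
   I_x left of I_y gives edges py and xq of H, so unless x = p or y = q the
   vertices p, y, x, q form a 4-cycle of G. In a block graph every cycle lies
   in a complete block, so x and y are then common neighbours of p and q. Hence
   every edge of H lies in the star at q or in the star at p augmented by the
   clique of common neighbours of p and q; both are threshold graphs. *)

Lemma adj_neq (T : eqType) (e : rel T) x y : irreflexive e -> e x y -> x != y.
Proof. by move=> ie; apply: contraTneq => ->; rewrite ie. Qed.

Section Blocks.
Variables (T : finType) (e : rel T).
Hypothesis se : symmetric e.

Definition induced_rel (A : {set T}) : rel T := [rel u v | [&& e u v, u \in A & v \in A]].

Lemma connected_on_from (A : {set T}) z : z \in A ->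
  (forall x, x \in A -> connect (induced_rel A) z x) -> connected_on e A.
Proof.
move=> zA zconn x y xA yA.
have sym_conn : connect_sym (induced_rel A).
  by apply: sym_connect_sym => u w; rewrite /induced_rel /= se (andbC (u \in A)).
by apply: (connect_trans (y := z)); [rewrite sym_conn|]; apply: zconn.
Qed.

Lemma path_connect_induced (A : {set T}) x s : {subset x :: s <= A} ->
  path e x s -> forall z, z \in x :: s -> connect (induced_rel A) x z.
Proof.
elim: s x => [|y s IH] x sA /=; first by move=> _ z; rewrite inE => /eqP ->.
case/andP=> exy ys z; rewrite inE => /predU1P [-> // | zys].
apply: (connect_trans (y := y)).
  by apply: connect1; rewrite /induced_rel /= exy !sA ?inE ?eqxx ?orbT.
by apply: IH => // w wys; apply: sA; rewrite inE wys orbT.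
Qed.

Lemma connected_on_path x s : path e x s -> connected_on e [set z in x :: s].
Proof.
move=> xs; apply: (connected_on_from (z := x)); first by rewrite in_set mem_head.
by move=> z; rewrite in_set; apply: path_connect_induced => // w; rewrite in_set.
Qed.

Lemma cycle_biconnected s : uniq s -> cycle e s -> s != [::] ->
  biconnected_set e [set z in s].
Proof.
move=> us cs; case: s us cs => [//|x s] us cs _; split; last split.
- by apply/set0Pn; exists x; rewrite in_set mem_head.
- by apply: connected_on_path; move: cs; rewrite /= rcons_path => /andP [].
(* Rotating v to the front shows that the cycle minus v is a path. *)
move=> v; rewrite inE => /rot_to [i s' def_s].
have vs' : v \notin s' by move: us; rewrite -(rot_uniq i) def_s => /andP [].
have -> : [set z in x :: s] :\ v = [set z in s'].
  apply/setP => z; rewrite in_setD1 !in_set -(mem_rot i) def_s in_cons.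
  by case: eqP => [-> | _]; rewrite ?(negbTE vs').
move: cs; rewrite -(rot_cycle i) def_s /= rcons_path => /andP [].
case: s' {def_s vs'} => [_ _ z w | y s' /= /andP [_ ys'] _]; first by rewrite inE.
exact: connected_on_path.
Qed.

Lemma biconnected_sub_block (B : {set T}) : biconnected_set e B ->
  exists2 B' : {set T}, B \subset B' & is_block e B'.
Proof.
move: {2}(#|T| - #|B|) (leqnn (#|T| - #|B|)) => n.
elim: n B => [|n IH] B le_n bB.
all: have [[B' ltBB' bB'] | maxB] :=
  classic (exists2 B' : {set T}, B \proper B' & biconnected_set e B');
  last by exists B => //; split=> // B' ltBB' bB'; apply: maxB; exists B'.
- by have := proper_card ltBB'; have := max_card B'; lia.
have [|B'' subB'B'' blockB''] := IH B' _ bB'.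
  by have := proper_card ltBB'; have := max_card B'; lia.
by exists B'' => //; apply: subset_trans subB'B''; apply: proper_sub.
Qed.

End Blocks.

Lemma block_graph_cycle_adj (T : finType) (e : rel T) s : block_graph e ->
  uniq s -> cycle e s -> {in s &, forall x y, x != y -> e x y}.
Proof.
move=> [[se _] block_complete] us cs x y xs ys.
have /biconnected_sub_block [B subsB blockB] : biconnected_set e [set z in s].
  by apply: cycle_biconnected => //; apply/eqP => s0; rewrite s0 in xs.
by apply: (block_complete B blockB); apply: (subsetP subsB); rewrite inE.
Qed.

Lemma index_cat_lt (T : eqType) (s1 s2 : seq T) x y : x \in s1 -> y \notin s1 ->
  index x (s1 ++ s2) < index y (s1 ++ s2).
Proof.
by move=> xs1 ys1; rewrite !index_cat xs1 (negbTE ys1) ltn_addr ?index_mem.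
Qed.

Definition closed_nbhd (T : finType) (e : rel T) (v : T) : {set T} :=
  [set x | (x == v) || e v x].

Definition star_clique (T : finType) (e : rel T) (v : T) (C : {set T}) : rel T :=
  fun x y => [&& x \in closed_nbhd e v, y \in closed_nbhd e v, e x y &
                 [|| x == v, y == v | (x \in C) && (y \in C)]].

Lemma star_clique_sym (T : finType) (e : rel T) v C :
  symmetric e -> symmetric (star_clique e v C).
Proof. by move=> se x y; rewrite /star_clique se andbCA (andbC (x \in C)) (orbCA (x == v)). Qed.

Lemma star_clique_subgraph (T : finType) (e : rel T) v C :
  symmetric e -> subgraph_of e (closed_nbhd e v) (star_clique e v C).
Proof. by move=> se; split=> [|x y /and4P []]; first exact: star_clique_sym. Qed.

Section StarCliqueThreshold.
Variables (T : finType) (e : rel T) (v : T) (C : {set T}).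
Hypotheses (se : symmetric e) (ie : irreflexive e).
Hypothesis C_adj_v : forall z, z \in C -> e v z.
Hypothesis C_clique : {in C &, forall z w, z != w -> e z w}.

Local Notation N := (closed_nbhd e v).

Let v_notin_C : v \notin C.
Proof. by apply/negP => /C_adj_v; rewrite ie. Qed.

Lemma star_cliqueE x y : x \in N -> y \in N -> x != y ->
  star_clique e v C x y = [|| x == v, y == v | (x \in C) && (y \in C)].
Proof.
move=> xN yN xy; rewrite /star_clique xN yN /=.
have [/or3P key | _] := boolP [|| x == v, y == v | (x \in C) && (y \in C)]; last by rewrite andbF.
rewrite andbT; case: key => [/eqP xv | /eqP yv | /andP [xC yC]]; last exact: C_clique.
- by subst x; move: yN; rewrite inE eq_sym (negbTE xy).
- by subst y; move: xN; rewrite inE (negbTE xy) se.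
Qed.

(* Build N[v] from the clique C, then the rest of N(v) as isolated vertices,
   then v as a universal vertex. *)
Let M := N :\: (v |: C).
Let s := (enum C ++ enum M) ++ [:: v].

Let mem_s x : (x \in s) = (x \in N).
Proof.
rewrite !mem_cat !mem_enum mem_seq1 !inE.
case: (eqVneq x v) => [-> | _]; rewrite ?orbT //= orbF.
by case: (boolP (x \in C)) => // /C_adj_v ->.
Qed.

Let uniq_s : uniq s.
Proof.
rewrite !cat_uniq !enum_uniq /= orbF mem_cat !mem_enum (negbTE v_notin_C) !inE eqxx /= !andbT.
by apply/hasPn => z; rewrite !mem_enum !inE negb_or => /andP [/andP [_ ->]].
Qed.

Let index_C_lt x y : x \in C -> y \notin C -> index x s < index y s.
Proof. by move=> xC yC; rewrite /s -catA index_cat_lt ?mem_enum. Qed.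

Let index_lt_v x : x \in N -> x != v -> index x s < index v s.
Proof.
move=> xN xv; apply: index_cat_lt.
  by move: xN; rewrite -mem_s mem_cat mem_seq1 (negbTE xv) orbF.
by rewrite mem_cat !mem_enum (negbTE v_notin_C) !inE eqxx.
Qed.

Lemma star_clique_threshold : threshold N (star_clique e v C).
Proof.
exists s, (fun z => (z \in C) || (z == v)); split=> //.
- by apply/eqP => /(congr1 (fun t => v \in t)); rewrite mem_s inE eqxx.
move=> x y xN yN xy; rewrite star_cliqueE //.
suff -> : [|| x == v, y == v | (x \in C) && (y \in C)] =
    (if index x s < index y s then (y \in C) || (y == v) else (x \in C) || (x == v)) by [].
case: (eqVneq x v) => [xv | xv].
  by subst x; rewrite ltnNge ltnW ?index_lt_v // ?orbT // eq_sym.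
case: (eqVneq y v) => [yv | yv]; first by subst y; rewrite index_lt_v // orbT.
rewrite !orbF; case: (boolP (x \in C)) => xC; case: (boolP (y \in C)) => yC //=.
- by rewrite if_same.
- by rewrite index_C_lt.
- by rewrite ltnNge ltnW ?index_C_lt.
- by rewrite if_same.
Qed.
End StarCliqueThreshold.

(* The vertex added at step i gets the point 2i+1 if it is universal and the
   interval [-2i, 2i] if it is isolated: a later point misses every earlier
   interval, a later interval contains every earlier one. *)
Definition step_lo (i : nat) (universal : bool) : R :=
  if universal then (2 * INR i + 1)%R else (- (2 * INR i))%R.
Definition step_hi (i : nat) (universal : bool) : R :=
  if universal then (2 * INR i + 1)%R else (2 * INR i)%R.

Lemma step_lo_le_hi i b : (step_lo i b <= step_hi i b)%R.
Proof. by have := pos_INR i; rewrite /step_lo /step_hi; case: b; lra. Qed.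

Lemma step_intervals_disjoint i j (bi bj : bool) : i < j ->
  bj <-> (step_hi i bi < step_lo j bj \/ step_hi j bj < step_lo i bi)%R.
Proof.
move=> lt_ij; have := pos_INR i; have : (INR i + 1 <= INR j)%R.
  by rewrite -S_INR; apply/le_INR/leP.
by rewrite /step_lo /step_hi; case: bi; case: bj; split=> //; lra.
Qed.

Lemma threshold_cointerval (T : finType) (S : {set T}) (h : rel T) :
  threshold S h -> cointerval S h.
Proof.
move=> [s [b [_ _ mem_s hE]]].
exists (fun x => step_lo (index x s) (b x)), (fun x => step_hi (index x s) (b x)).
split=> [x _ | x y xS yS xy]; first exact: step_lo_le_hi.
rewrite hE //; case: ltngtP => [lt_xy | lt_yx | eq_xy].
- exact: step_intervals_disjoint.
- by rewrite or_comm; apply: step_intervals_disjoint.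
- have [xs ys] : x \in s /\ y \in s by rewrite !mem_s.
  by move: xy; rewrite -(nth_index x xs) -(nth_index x ys) eq_xy eqxx.
Qed.

Lemma exists_Rargmin_seq (T : eqType) (f : T -> R) x s :
  exists2 p, p \in x :: s & forall z, z \in x :: s -> (f p <= f z)%R.
Proof.
elim: s x => [|y s IH] x.
  by exists x => [|z]; rewrite ?inE // => /eqP ->; apply: Rle_refl.
have [p ps p_min] := IH y; case: (Rle_or_lt (f x) (f p)) => [le_xp | lt_px].
  exists x => [|z]; first exact: mem_head.
  by rewrite inE => /predU1P [-> | /p_min]; [apply: Rle_refl | apply: Rle_trans].
exists p => [|z]; first by rewrite inE ps orbT.
by rewrite inE => /predU1P [-> | /p_min //]; apply: Rlt_le.
Qed.

Lemma exists_Rargmin_set (T : finType) (f : T -> R) (S : {set T}) : S != set0 ->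
  exists2 p, p \in S & forall z, z \in S -> (f p <= f z)%R.
Proof.
case/set0Pn=> x xS; have memS z : (z \in x :: enum S) = (z \in S).
  by rewrite inE mem_enum; case: eqP => // ->.
have [p] := exists_Rargmin_seq f x (enum S); rewrite memS => pS p_min.
by exists p => // z; rewrite -memS; apply: p_min.
Qed.

Lemma block_graph_C4_chords (T : finType) (e : rel T) a b c d : block_graph e ->
  a != c -> b != d -> e a b -> e b c -> e c d -> e d a -> e a c /\ e b d.
Proof.
move=> bg ac bd eab ebc ecd eda; have [[_ ie] _] := bg.
have ad : a != d by rewrite eq_sym (adj_neq ie eda).
have uniq_abcd : uniq [:: a; b; c; d].
  by rewrite /= !inE !negb_or ac bd ad (adj_neq ie eab) (adj_neq ie ebc) (adj_neq ie ecd).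
have cycle_abcd : cycle e [:: a; b; c; d] by rewrite /= eab ebc ecd eda.
have adj := block_graph_cycle_adj bg uniq_abcd cycle_abcd.
by split; apply: adj; rewrite // !inE eqxx ?orbT.
Qed.

Definition edge_clique (T : finType) (e : rel T) (p q : T) : {set T} :=
  [set z | [&& e p q, e p z & (z == q) || e q z]].

Lemma edge_clique_clique (T : finType) (e : rel T) p q : block_graph e ->
  {in edge_clique e p q &, forall z w, z != w -> e z w}.
Proof.
move=> bg z w; have [[se ie] _] := bg.
rewrite !inE => /and3P [epq epz zq] /and3P [_ epw wq] zw.
case: (eqVneq z q) zq => [eq_zq _ | zq /= eqz].
  by subst z; move: wq; rewrite eq_sym (negbTE zw).
case: (eqVneq w q) wq => [-> _ | wq /= eqw]; first by rewrite se.
by have [] := block_graph_C4_chords bg (adj_neq ie epq) zw epz _ eqw _; rewrite se.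
Qed.

Section CointervalTwoStars.
Variables (T : finType) (e : rel T) (S : {set T}) (h : rel T) (l r : T -> R).
Hypotheses (bg : block_graph e) (hS : subgraph_of e S h).
Hypotheses (lr : forall x, x \in S -> (l x <= r x)%R)
  (hE : forall x y, x \in S -> y \in S -> x != y -> h x y <-> (r x < l y \/ r y < l x)%R).
Variables p q : T.
Hypotheses (pS : p \in S) (qS : q \in S).
Hypothesis p_min : forall z, z \in S -> (r p <= r z)%R.
Hypothesis q_max : forall z, z \in S -> (l z <= l q)%R.

Lemma disjoint_adj x y : x \in S -> y \in S -> (r x < l y)%R -> e x y.
Proof.
move=> xS yS lt_xy; have xy : x != y by apply/eqP => eq_xy; subst y; have := lr xS; lra.
by have [] := hS.2 x y (proj2 (hE xS yS xy) (or_introl lt_xy)).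
Qed.

Lemma disjoint_edge_in_stars x y : x \in S -> y \in S -> (r x < l y)%R ->
  star_clique e p (edge_clique e p q) x y \/ star_clique e q set0 x y.
Proof.
move=> xS yS lt_xy; have [[se _] _] := bg.
have exy := disjoint_adj xS yS lt_xy.
have epy : e p y by apply: disjoint_adj => //; have := p_min xS; lra.
have exq : e x q by apply: disjoint_adj => //; have := q_max yS; lra.
case: (eqVneq x p) => [eq_xp | xp].
  by subst x; left; rewrite /star_clique !inE eqxx epy !orbT.
case: (eqVneq y q) => [eq_yq | yq].
  by subst y; right; rewrite /star_clique !inE eqxx se exq !orbT.
have epq : e p q by apply: disjoint_adj => //; have := p_min xS; have := q_max yS; lra.
have px : p != x by rewrite eq_sym.
have [epx eyq] : e p x /\ e y q.
  by apply: (block_graph_C4_chords bg px yq epy _ exq); rewrite se.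
by left; rewrite /star_clique !inE epx epy exy epq !(se q) exq eyq !orbT.
Qed.
End CointervalTwoStars.

Lemma cointerval_two_stars (T : finType) (e : rel T) (S : {set T}) (h : rel T)
    (x0 : T) :
  block_graph e -> subgraph_of e S h -> cointerval S h ->
  exists p q, forall x y, h x y ->
    star_clique e p (edge_clique e p q) x y \/ star_clique e q set0 x y.
Proof.
move=> bg hS [l [r [lr hE]]]; have [[se ie] _] := bg.
have [S0 | S_nonempty] := eqVneq S set0.
  by exists x0, x0 => x y /hS.2 []; rewrite S0 inE.
have [p pS p_min] := exists_Rargmin_set r S_nonempty.
have [q qS q_max] := exists_Rargmin_set (fun z => - l z)%R S_nonempty.
have {}q_max z : z \in S -> (l z <= l q)%R by move/q_max; lra.
have in_stars := disjoint_edge_in_stars bg hS lr hE pS qS p_min q_max.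
exists p, q => x y hxy; have [xS yS exy] := hS.2 x y hxy.
case: (proj1 (hE x y xS yS (adj_neq ie exy)) hxy) => [lt_xy | lt_yx]; first exact: in_stars.
by rewrite !(star_clique_sym _ _ se x y); apply: in_stars.
Qed.

Lemma cointerval_covered_by_two_thresholds (T : finType) (e : rel T)
    (S : {set T}) (h : rel T) (x0 : T) :
  block_graph e -> subgraph_of e S h -> cointerval S h ->
  exists (S' : bool -> {set T}) (h' : bool -> rel T),
    [/\ forall c, subgraph_of e (S' c) (h' c), forall c, threshold (S' c) (h' c)
      & forall x y, h x y -> exists c, h' c x y].
Proof.
move=> bg hS hco; have [[se ie] _] := bg.
have [p [q cover]] := cointerval_two_stars x0 bg hS hco.
exists (fun c => closed_nbhd e (if c then p else q)).
exists (fun c => if c then star_clique e p (edge_clique e p q) else star_clique e q set0).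
split.
- by case; apply: star_clique_subgraph.
- case; apply: star_clique_threshold => //.
  + by move=> z; rewrite inE => /and3P [].
  + exact: edge_clique_clique.
  + by move=> z; rewrite inE.
  + by move=> z; rewrite inE.
- by move=> x y /cover [h_xy | h_xy]; [exists true | exists false].
Qed.

Section EdgeCovers.
Variables (T : finType) (e : rel T).

Lemma edge_cover_weaken (P Q : {set T} -> rel T -> Prop) k :
  (forall S h, P S h -> Q S h) -> edge_cover e P k -> edge_cover e Q k.
Proof. by move=> PQ [S [h [sub PSh cover]]]; exists S, h; split=> // i; apply: PQ. Qed.

Lemma edge_cover0 (P : {set T} -> rel T -> Prop) : #|T| = 0 -> edge_cover e P 0.
Proof.
move=> T0; exists (fun=> set0), (fun=> fun _ _ => false); split; try by case.
by move=> x; have := card0_eq T0 x.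
Qed.

Lemma edge_cover_double (P Q : {set T} -> rel T -> Prop) k :
  (forall S h, subgraph_of e S h -> P S h ->
     exists (S' : bool -> {set T}) (h' : bool -> rel T),
       [/\ forall c, subgraph_of e (S' c) (h' c), forall c, Q (S' c) (h' c)
         & forall x y, h x y -> exists c, h' c x y]) ->
  edge_cover e P k -> edge_cover e Q (k + k).
Proof.
move=> split2 [S [h [sub PSh cover]]].
have /fin_all_exists [S' /fin_all_exists [h' split_h]] := fun j => split2 _ _ (sub j) (PSh j).
pose half (i : 'I_(k + k)) : 'I_k * bool :=
  match fintype.split i with inl j => (j, false) | inr j => (j, true) end.
exists (fun i => S' (half i).1 (half i).2), (fun i => h' (half i).1 (half i).2).
split=> [i | i | x y]; [by case: (split_h (half i).1) | by case: (split_h (half i).1) | split].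
- case/cover=> j hj; have [_ _ /(_ x y hj) [c hjc]] := split_h j.
  by exists (unsplit (if c then inr j else inl j)); rewrite /half unsplitK; case: c hjc.
- case=> i hi; have [sub' _ _] := split_h (half i).1.
  by have [_ /(_ x y hi) []] := sub' (half i).2.
Qed.
End EdgeCovers.

Theorem proposition15 (T : finType) (e : rel T) (a b : nat) :
  block_graph e -> is_cobox e a -> is_cothdim e b ->
  a <= b <= 2 * a.
Proof.
move=> bg [cover_a min_a] [cover_b min_b]; apply/andP; split.
  by apply/min_a/(edge_cover_weaken _ cover_b) => S h; apply: threshold_cointerval.
case: (posnP #|T|) => [T0 | /card_gt0P [x0 _]].
  by apply: leq_trans (min_b 0 (edge_cover0 _ _ T0)) _.
rewrite mul2n -addnn; apply/min_b/(edge_cover_double _ cover_a) => S h.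
exact: cointerval_covered_by_two_thresholds x0 bg.
Qed.
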